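(* For rooted trees $T_1$ and $T_2$, the quotient of the rooted tree $T_1+T_2$ satisfies $$q_{T_1+T_2}=\frac{q_{T_1}}{1-z\,q_{T_1}q_{T_2}}=\frac{z+1-z\,q_{T_2'}}{(z+1-z\,q_{T_1'})(z+1-z\,q_{T_2'})-z}.$$
   Context: For a tree $T$ on $n$ vertices with adjacency characteristic polynomial $\chi_T$, its reciprocal polynomial is $R_T(z)=z^{n/2}\chi_T(\sqrt z+1/\sqrt z)$. A rooted tree is a tree with a distinguished vertex $r$ (its root). For a rooted tree $T$, $T'$ denotes the rooted forest $T-\{r\}$, the root of each component being the vertex adjacent to $r$ in $T$. The quotient of a rooted tree $T$ is the rational function $q_T=\prod_iR_{T_i}(z)/R_T(z)$, where the $T_i$ are the trees of $T'$ (empty product $=1$); the quotient of a rooted forest is the sum of the quotients of its trees (so the quotient of the empty forest is $0$). For rooted trees $T_1,T_2$, the rooted tree $T_1+T_2$ is obtained by joining the roots of $T_1$ and $T_2$ by an edge, its root being the root of $T_1$. *)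

From HB Require Import structures.
From mathcomp Require Import all_boot all_order all_algebra.
Set Implicit Arguments. Unset Strict Implicit. Unset Printing Implicit Defensive.
Import Order.TTheory GRing.Theory Num.Theory.
Local Open Scope ring_scope.

(* Rooted trees: a root together with the (ordered) list of rooted subtrees
   hanging from it.  Children order is irrelevant for all notions below. *)
Inductive rtree : Type := Node of seq rtree.

Definition children (t : rtree) : seq rtree := let: Node ts := t in ts.

Fixpoint rtsize (t : rtree) : nat :=
  let: Node ts := t in (sumn (map rtsize ts)).+1.

(* edges of t, vertices labelled 0 .. rtsize t - 1 in preorder, root = 0 *)
Fixpoint tedges (t : rtree) : seq (nat * nat) :=
  let: Node ts := t in
  let fix go (off : nat) (cs : seq rtree) : seq (nat * nat) :=
      match cs with
      | [::] => [::]
      | c :: cs' => (0%N, off) :: [seq ((p.1 + off)%N, (p.2 + off)%N) | p <- tedges c]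
                     ++ go (off + rtsize c)%N cs'
      end in
  go 1%N ts.

Section Quot.
Variable R : numFieldType.

Definition adjmx (t : rtree) : 'M[R]_(rtsize t) :=
  \matrix_(i, j) ((((i : nat), (j : nat)) \in tedges t) || (((j : nat), (i : nat)) \in tedges t))%:R.

Definition chiT (t : rtree) : {poly R} := char_poly (adjmx t).

(* rational functions; we work in R(w) with w = sqrt z, so z = w^2 *)
Definition RF := {fraction {poly R}}.
Definition toRF (p : {poly R}) : RF := FracField.tofrac p.
Definition sqz : RF := toRF 'X.
Definition zvar : RF := sqz ^+ 2.

Definition recT (t : rtree) : RF :=
  sqz ^+ rtsize t * (map_poly (fun c : R => toRF c%:P) (chiT t)).[sqz + sqz^-1].

Definition quotT (t : rtree) : RF :=
  (\prod_(c <- children t) recT c) / recT t.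

Definition quotF (f : seq rtree) : RF := \sum_(c <- f) quotT c.

End Quot.

(* T1 + T2: join the roots by an edge, root of T1 is the root *)
Definition tjoin (t1 t2 : rtree) : rtree := Node (rcons (children t1) t2).

From HB Require Import structures.
From mathcomp Require Import all_boot all_order all_algebra.
From mathcomp Require Import perm ring zify.
Set Implicit Arguments. Unset Strict Implicit. Unset Printing Implicit Defensive.
Import Order.TTheory GRing.Theory Num.Theory.
Local Open Scope ring_scope.

(* Expanding the determinant of x - A(T1+T2) along the new edge between the
   roots r1, r2 gives chi(T1+T2) = chi(T1) chi(T2) - chi(T1-r1) chi(T2-r2),
   while chi(T1+T2 - r1) = chi(T1-r1) chi(T2).  In reciprocal form, with
   R_F the product of R over a forest F, this reads
     R(T1+T2) = R(T1) R(T2) - z R(T1') R(T2'),   R((T1+T2)') = R(T1') R(T2),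
   and dividing by R(T1) R(T2) gives the first formula.  Since every rooted
   tree is a single vertex joined repeatedly with rooted trees, induction over
   joins yields R(T) = R(T') (z + 1 - z q(T')), i.e. q(T) = 1/(z + 1 - z q(T')),
   which turns the first formula into the second.  All denominators are
   nonzero because R(T) and R(T') are polynomials in sqrt z with constant
   term 1. *)

Section NatIndexedDeterminants.
Variable S : comNzRingType.

(* Matrices are given by nat-indexed entry functions, so that block
   decompositions need no casts between ordinal types. *)
Definition detn n (F : nat -> nat -> S) : S := \det (\matrix_(i < n, j < n) F i j).

Lemma eq_detn n F G :
  (forall i j, (i < n)%N -> (j < n)%N -> F i j = G i j) -> detn n F = detn n G.
Proof. by move=> eqFG; congr (\det _); apply/matrixP=> i j; rewrite !mxE eqFG. Qed.

Lemma detn0 F : detn 0%N F = 1.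
Proof. by rewrite /detn det_mx00. Qed.

Lemma detn1 F : detn 1%N F = F 0%N 0%N.
Proof. by rewrite /detn det_mx11 mxE. Qed.

Lemma detn_tr n F : detn n F = detn n (fun i j => F j i).
Proof. by rewrite /detn -det_tr; congr (\det _); apply/matrixP=> i j; rewrite !mxE. Qed.

Lemma detn_ublock n1 n2 F :
  (forall i j, (n1 <= i < n1 + n2)%N -> (j < n1)%N -> F i j = 0) ->
  detn (n1 + n2) F = detn n1 F * detn n2 (fun i j => F (n1 + i)%N (n1 + j)%N).
Proof.
move=> F_dl; rewrite /detn -(det_ublock _ (\matrix_(i < n1, j < n2) F i (n1 + j)%N)).
congr (\det _); apply/matrixP=> i j; rewrite -[i]splitK -[j]splitK.
case: (split i) => i'; case: (split j) => j'.
- by rewrite block_mxEul !mxE.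
- by rewrite block_mxEur !mxE.
- by rewrite block_mxEdl !mxE /= F_dl // leq_addr ltn_add2l ltn_ord.
- by rewrite block_mxEdr !mxE.
Qed.

Lemma detn_lblock n1 n2 F :
  (forall i j, (i < n1)%N -> (n1 <= j < n1 + n2)%N -> F i j = 0) ->
  detn (n1 + n2) F = detn n1 F * detn n2 (fun i j => F (n1 + i)%N (n1 + j)%N).
Proof.
move=> F_ur; rewrite detn_tr detn_ublock => [|i j *]; last exact: F_ur.
by congr (_ * _); rewrite detn_tr.
Qed.

Lemma detn_rowD n F G H i0 : (i0 < n)%N ->
  (forall j, (j < n)%N -> F i0 j = G j + H j) ->
  detn n F = detn n (fun i j => if i == i0 then G j else F i j)
           + detn n (fun i j => if i == i0 then H j else F i j).
Proof.
move=> lt_i0n FGH; rewrite /detn.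
have row'E K : row' (Ordinal lt_i0n)
    (\matrix_(i < n, j < n) if (i : nat) == i0 then K j else F i j) =
  row' (Ordinal lt_i0n) (\matrix_(i < n, j < n) F i j).
  apply/matrixP=> i j; rewrite !mxE.
  by have := neq_lift (Ordinal lt_i0n) i; rewrite -val_eqE eq_sym => /negbTE ->.
rewrite (determinant_multilinear (i0 := Ordinal lt_i0n) (b := 1) (c := 1) _ (row'E G) (row'E H)).
  by rewrite !mul1r.
by apply/rowP=> j; rewrite !mxE /= eqxx !mul1r FGH.
Qed.

Definition swap0 k (j : nat) : nat := if j == 0%N then k else if j == k then 0%N else j.

Lemma swap0_id k j : j != 0%N -> j != k -> swap0 k j = j.
Proof. by rewrite /swap0 => /negbTE -> /negbTE ->. Qed.

Lemma swap0_eq k j : k != 0%N -> (swap0 k j == k) = (j == 0%N).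
Proof.
rewrite /swap0 => k_neq0; case: (j =P 0%N) => [_|_]; first exact: eqxx.
by case: (j =P k) => [_|/eqP/negbTE //]; rewrite eq_sym (negbTE k_neq0).
Qed.

Lemma swap0_kk k : swap0 k k = 0%N.
Proof. by rewrite /swap0; case: eqP => [->|_]; rewrite ?eqxx. Qed.

Lemma detn_swap0 n F k : (0 < k < n)%N -> detn n F = - detn n (fun i j => F i (swap0 k j)).
Proof.
case/andP=> k_gt0 lt_kn; have n_gt0 : (0 < n)%N by apply: ltn_trans lt_kn.
have ne0k : Ordinal n_gt0 != Ordinal lt_kn by rewrite -val_eqE /= eq_sym -lt0n.
rewrite /detn; suff -> : \matrix_(i < n, j < n) F i (swap0 k j) =
          xcol (Ordinal n_gt0) (Ordinal lt_kn) (\matrix_(i < n, j < n) F i j).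
  by rewrite xcolE det_mulmx det_perm odd_tperm ne0k mulrN1 opprK.
apply/matrixP=> i j; rewrite !mxE /swap0.
case: tpermP => [->|->|/eqP + /eqP] //=; first by rewrite gtn_eqF // eqxx.
by rewrite -!val_eqE /= => /negbTE -> /negbTE ->.
Qed.

End NatIndexedDeterminants.

Section CoupledBlocks.
Variables (S : comNzRingType) (m1 m2 : nat) (F : nat -> nat -> S).
Local Notation n1 := m1.+1.
Local Notation n2 := m2.+1.
Hypothesis F_ur : forall i j, (i < n1)%N -> (n1 <= j < n1 + n2)%N ->
  F i j = - ((i == 0%N) && (j == n1))%:R.
Hypothesis F_dl : forall i j, (i < n1)%N -> (n1 <= j < n1 + n2)%N ->
  F j i = - ((i == 0%N) && (j == n1))%:R.

Lemma detn_coupled_diag :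
  detn (n1 + n2) (fun i j => if i == 0%N then (if (j < n1)%N then F 0%N j else 0) else F i j)
  = detn n1 F * detn n2 (fun i j => F (n1 + i)%N (n1 + j)%N).
Proof.
rewrite detn_lblock => [|i j lt_i /andP[le_j lt_j]]; last first.
  case: eqP => [_|/eqP i_neq0]; first by rewrite ltnNge le_j.
  by rewrite F_ur ?le_j // (negbTE i_neq0) oppr0.
congr (_ * _); apply: eq_detn => i j lt_i lt_j //=.
by case: eqP => // ->; rewrite lt_j.
Qed.

Lemma detn_coupled_bridge :
  detn (n1 + n2) (fun i j => if i == 0%N then - (j == n1)%:R else F i j)
  = - (detn m1 (fun i j => F i.+1 j.+1) * detn m2 (fun i j => F (n1 + i.+1)%N (n1 + j.+1)%N)).
Proof.
rewrite (@detn_swap0 _ _ _ n1); last by lia.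
have -> : (n1 + n2 = 1 + (m1 + n2))%N by rewrite addSn.
rewrite detn_lblock => [|i j]; last first.
  rewrite ltnS leqn0 => /eqP -> /andP[j_gt0 _].
  by rewrite eqxx swap0_eq // gtn_eqF // oppr0.
rewrite detn1 eqxx swap0_eq //= mulN1r opprK.
rewrite detn_ublock => [|i j /andP[le_i lt_i] lt_j]; last first.
  by rewrite swap0_id ?F_dl ?add1n ?oppr0 //; lia.
have -> : n2 = (1 + m2)%N by [].
rewrite detn_ublock => [|i j /andP[le_i lt_i]]; last first.
  rewrite ltnS leqn0 => /eqP ->; rewrite addn0 add1n swap0_kk F_dl //; last by lia.
  have /negbTE -> : (m1 + i).+1 != n1 by lia.
  by rewrite andbF oppr0.
rewrite detn1 !addn0 !add1n swap0_kk F_dl //; last by lia.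
rewrite !eqxx mulN1r mulrN; congr (- (_ * _)); apply: eq_detn => i j lt_i lt_j.
  by rewrite swap0_id //; lia.
have shiftE x : (1 + (m1 + (1 + x)) = n1 + x.+1)%N by lia.
by rewrite !shiftE swap0_id //; lia.
Qed.

Lemma detn_coupled :
  detn (n1 + n2) F = detn n1 F * detn n2 (fun i j => F (n1 + i)%N (n1 + j)%N)
    - detn m1 (fun i j => F i.+1 j.+1) * detn m2 (fun i j => F (n1 + i.+1)%N (n1 + j.+1)%N).
Proof.
rewrite (@detn_rowD _ _ _ (fun j => if (j < n1)%N then F 0%N j else 0)
                        (fun j => - (j == n1)%:R) 0%N) //.
  by rewrite detn_coupled_diag detn_coupled_bridge.
move=> j lt_j; case: ltnP => [lt_jn1|le_n1j].
  by rewrite (ltn_eqF lt_jn1) oppr0 addr0.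
by rewrite add0r F_ur ?le_n1j.
Qed.

End CoupledBlocks.

Lemma rtsize_gt0 t : (0 < rtsize t)%N.
Proof. by case: t. Qed.

Lemma rtsize_join t1 t2 : rtsize (tjoin t1 t2) = (rtsize t1 + rtsize t2)%N.
Proof. by case: t1 => ts; rewrite /tjoin /= -cats1 map_cat sumn_cat /= addn0 addSn. Qed.

Lemma rtree_join_ind (P : rtree -> Prop) :
  P (Node [::]) -> (forall t1 t2, P t1 -> P t2 -> P (tjoin t1 t2)) -> forall t, P t.
Proof.
move=> P_leaf P_join t; have [n] := ubnP (rtsize t); elim: n t => // n IH [ts].
case/lastP: ts => [|ts c] // lt_n; apply: (P_join (Node ts) c); apply: IH.
all: move: lt_n; rewrite (rtsize_join (Node ts) c).
all: by have := rtsize_gt0 c; have := rtsize_gt0 (Node ts); lia.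
Qed.

(* The local fixpoint in the definition of [tedges]. *)
Fixpoint forest_edges (off : nat) (cs : seq rtree) : seq (nat * nat) :=
  if cs is c :: cs' then
    (0%N, off) :: [seq ((p.1 + off)%N, (p.2 + off)%N) | p <- tedges c]
      ++ forest_edges (off + rtsize c)%N cs'
  else [::].

Lemma tedges_node ts : tedges (Node ts) = forest_edges 1 ts.
Proof. by []. Qed.

Lemma forest_edges_rcons off cs c :
  let k := (off + sumn (map rtsize cs))%N in
  forest_edges off (rcons cs c) =
  forest_edges off cs ++ (0%N, k) :: [seq ((p.1 + k)%N, (p.2 + k)%N) | p <- tedges c].
Proof.
elim: cs off => [|c' cs IH] off /=; first by rewrite addn0 cats0.
by rewrite IH -catA /= !addnA.
Qed.

Lemma mem_tedges_join t1 t2 i j :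
  let n1 := rtsize t1 in
  ((i, j) \in tedges (tjoin t1 t2)) =
  [|| (i, j) \in tedges t1, (i == 0%N) && (j == n1) |
      [&& n1 <= i, n1 <= j & (i - n1, j - n1) \in tedges t2]]%N.
Proof.
case: t1 => ts n1; rewrite /tjoin tedges_node forest_edges_rcons mem_cat inE.
congr [|| _, _ | _]; apply/mapP/idP => [[[a b] ab_in [-> ->]] | /and3P[le_i le_j ij_in]].
  by rewrite !leq_addl !addnK.
by exists (i - n1, j - n1)%N => //=; rewrite !subnK.
Qed.

Lemma tedges_bound t p : p \in tedges t -> (p.1 < rtsize t)%N && (p.2 < rtsize t)%N.
Proof.
elim/rtree_join_ind: t p => [|t1 t2 IH1 IH2] [i j] //.
rewrite mem_tedges_join rtsize_join /=.
case/or3P => [/IH1 | /andP[/eqP -> /eqP ->] | /and3P[_ _ /IH2]] /=.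
all: by have := rtsize_gt0 t2; lia.
Qed.

Lemma tedges_outside t i j :
  (rtsize t <= i)%N || (rtsize t <= j)%N -> ((i, j) \in tedges t) = false.
Proof. by move=> out; apply/negbTE/negP => /tedges_bound /=; move: out; lia. Qed.

Definition adj (t : rtree) (i j : nat) : bool := ((i, j) \in tedges t) || ((j, i) \in tedges t).

Lemma adjC t i j : adj t i j = adj t j i.
Proof. by rewrite /adj orbC. Qed.

Section AdjJoin.
Variables t1 t2 : rtree.
Local Notation n1 := (rtsize t1).

Lemma adj_join_l i j : (i < n1)%N -> (j < n1)%N -> adj (tjoin t1 t2) i j = adj t1 i j.
Proof.
move=> lt_i lt_j; rewrite /adj !mem_tedges_join (ltn_eqF lt_i) (ltn_eqF lt_j).
by rewrite !(leqNgt n1) lt_i lt_j !andbF /= !orbF.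
Qed.

Lemma adj_join_r i j : adj (tjoin t1 t2) (n1 + i) (n1 + j) = adj t2 i j.
Proof.
rewrite /adj !mem_tedges_join !(@tedges_outside t1) ?leq_addr // !addKn /=.
by rewrite !addn_eq0 (gtn_eqF (rtsize_gt0 t1)).
Qed.

Lemma adj_join_cross i j : (i < n1)%N -> (n1 <= j)%N ->
  adj (tjoin t1 t2) i j = (i == 0%N) && (j == n1).
Proof.
move=> lt_i le_j; rewrite /adj !mem_tedges_join !(@tedges_outside t1) ?le_j ?orbT //.
by rewrite (ltn_eqF lt_i) (leqNgt n1) lt_i /= !andbF !orbF.
Qed.

End AdjJoin.

Section CharPoly.
Variable R : numFieldType.

Definition char_entry (t : rtree) (i j : nat) : {poly R} := 'X *+ (i == j) - (adj t i j)%:R.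

Lemma chiTE t : chiT R t = detn (rtsize t) (char_entry t).
Proof.
rewrite /chiT /char_poly /detn; congr (\det _); apply/matrixP => i j.
by rewrite !mxE /char_entry polyC_natr.
Qed.

Definition chiT' (t : rtree) : {poly R} := detn (rtsize t).-1 (fun i j => char_entry t i.+1 j.+1).

Section Join.
Variables t1 t2 : rtree.
Local Notation n1 := (rtsize t1).

Lemma char_entry_join_l i j : (i < n1)%N -> (j < n1)%N ->
  char_entry (tjoin t1 t2) i j = char_entry t1 i j.
Proof. by move=> lt_i lt_j; rewrite /char_entry adj_join_l. Qed.

Lemma char_entry_join_r i j : char_entry (tjoin t1 t2) (n1 + i) (n1 + j) = char_entry t2 i j.
Proof. by rewrite /char_entry adj_join_r eqn_add2l. Qed.

Lemma char_entry_join_cross i j : (i < n1)%N -> (n1 <= j)%N ->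
  char_entry (tjoin t1 t2) i j = - ((i == 0%N) && (j == n1))%:R /\
  char_entry (tjoin t1 t2) j i = - ((i == 0%N) && (j == n1))%:R.
Proof.
move=> lt_i le_j; have /negbTE i_neq_j : i != j by rewrite ltn_eqF // (leq_trans lt_i).
by rewrite /char_entry [adj _ j i]adjC [j == i]eq_sym i_neq_j adj_join_cross // mulr0n sub0r.
Qed.

Lemma chiT_join : chiT R (tjoin t1 t2) = chiT R t1 * chiT R t2 - chiT' t1 * chiT' t2.
Proof.
rewrite !chiTE /chiT' rtsize_join.
have [m1 e1] : exists m, n1 = m.+1 by exists n1.-1; rewrite prednK ?rtsize_gt0.
have [m2 e2] : exists m, rtsize t2 = m.+1 by exists (rtsize t2).-1; rewrite prednK ?rtsize_gt0.
rewrite e1 e2 /= detn_coupled => [|i j lt_i /andP[le_j _]|i j lt_i /andP[le_j _]];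
  [| by move: lt_i le_j; rewrite -e1 => lt_i le_j; case: (char_entry_join_cross lt_i le_j) ..].
congr (_ * _ - _ * _); apply: eq_detn => i j lt_i lt_j.
- by rewrite char_entry_join_l ?e1.
- by rewrite -e1 char_entry_join_r.
- by rewrite char_entry_join_l ?e1.
- by rewrite -e1 char_entry_join_r.
Qed.

Lemma chiT'_join : chiT' (tjoin t1 t2) = chiT' t1 * chiT R t2.
Proof.
rewrite /chiT' chiTE rtsize_join.
have [m1 e1] : exists m, n1 = m.+1 by exists n1.-1; rewrite prednK ?rtsize_gt0.
rewrite e1 addSn /= detn_lblock => [|i j lt_i /andP[le_j _]]; last first.
  have [lt_i1 le_j1] : (i.+1 < n1)%N /\ (n1 <= j.+1)%N by rewrite e1.
  by case: (char_entry_join_cross lt_i1 le_j1) => -> _; rewrite oppr0.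
congr (_ * _); apply: eq_detn => i j lt_i lt_j.
  by rewrite char_entry_join_l ?e1.
by rewrite -!addSn -e1 char_entry_join_r.
Qed.

End Join.

Lemma chiT_leaf : chiT R (Node [::]) = 'X.
Proof. by rewrite chiTE detn1 /char_entry /adj /= mulr1n subr0. Qed.

Lemma chiT'_leaf : chiT' (Node [::]) = 1.
Proof. exact: detn0. Qed.

End CharPoly.

Lemma divf_1Bmul (F : fieldType) (x1 x2 y1 y2 c : F) :
  y1 != 0 -> y2 != 0 -> y1 * y2 - c * x1 * x2 != 0 ->
  x1 * y2 / (y1 * y2 - c * x1 * x2) = (x1 / y1) / (1 - c * (x1 / y1) * (x2 / y2)).
Proof.
move=> y1_neq0 y2_neq0 d_neq0.
have -> : 1 - c * (x1 / y1) * (x2 / y2) = (y1 * y2 - c * x1 * x2) / (y1 * y2) by field; apply/andP.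
by field; rewrite d_neq0 y1_neq0 y2_neq0.
Qed.

Lemma divf_inv_1B (F : fieldType) (a b c : F) : a != 0 -> b != 0 ->
  a^-1 / (1 - c * a^-1 * b^-1) = b / (a * b - c).
Proof.
move=> a_neq0 b_neq0; have ab_neq0 : a * b != 0 by rewrite mulf_neq0.
have -> : 1 - c * a^-1 * b^-1 = (a * b - c) / (a * b) by field; rewrite a_neq0 b_neq0.
by rewrite invf_div mulrA mulKf.
Qed.

Section Reciprocal.
Variable R : numFieldType.
Local Notation w := (sqz R).
Local Notation z := (zvar R).

Definition ev_sqz (p : {poly R}) : RF R := (map_poly (fun c : R => toRF c%:P) p).[w + w^-1].

Lemma ev_sqz_comp : (fun c : R => toRF c%:P) = (@FracField.tofrac _ \o polyC).
Proof. by []. Qed.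

Lemma ev_sqzM p q : ev_sqz (p * q) = ev_sqz p * ev_sqz q.
Proof. by rewrite /ev_sqz ev_sqz_comp rmorphM hornerM. Qed.

Lemma ev_sqzB p q : ev_sqz (p - q) = ev_sqz p - ev_sqz q.
Proof. by rewrite /ev_sqz ev_sqz_comp rmorphB hornerD hornerN. Qed.

Lemma ev_sqz1 : ev_sqz 1 = 1.
Proof. by rewrite /ev_sqz ev_sqz_comp rmorph1 hornerC. Qed.

Lemma ev_sqzX : ev_sqz 'X = w + w^-1.
Proof. by rewrite /ev_sqz ev_sqz_comp map_polyX hornerX. Qed.

Definition recF (f : seq rtree) : RF R := \prod_(c <- f) recT R c.

Lemma recTE t : recT R t = w ^+ rtsize t * ev_sqz (chiT R t).
Proof. by []. Qed.

Lemma quotTE t : quotT R t = recF (children t) / recT R t.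
Proof. by []. Qed.

Lemma recF_rcons f t : recF (rcons f t) = recF f * recT R t.
Proof. by rewrite /recF big_rcons. Qed.

Lemma quotF_rcons f t : quotF R (rcons f t) = quotF R f + quotT R t.
Proof. by rewrite /quotF big_rcons. Qed.

Lemma recT_leaf : recT R (Node [::]) = z + 1.
Proof.
by rewrite recTE chiT_leaf ev_sqzX /= expr1 mulrDr mulfV ?tofrac_eq0 ?polyX_eq0 // /zvar expr2.
Qed.

Lemma recF_children t : recF (children t) = w ^+ (rtsize t).-1 * ev_sqz (chiT' R t).
Proof.
elim/rtree_join_ind: t => [|t1 t2 IH1 _]; first by rewrite /recF big_nil chiT'_leaf ev_sqz1 mulr1.
rewrite recF_rcons IH1 chiT'_join ev_sqzM rtsize_join recTE.
have -> : ((rtsize t1 + rtsize t2).-1 = (rtsize t1).-1 + rtsize t2)%N.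
  by have := rtsize_gt0 t1; lia.
by rewrite exprD; ring.
Qed.

Lemma recT_join t1 t2 :
  recT R (tjoin t1 t2) = recT R t1 * recT R t2 - z * recF (children t1) * recF (children t2).
Proof.
rewrite !recTE !recF_children chiT_join ev_sqzB !ev_sqzM rtsize_join /zvar.
case: (rtsize t1) (rtsize_gt0 t1) => // k1 _; case: (rtsize t2) (rtsize_gt0 t2) => // k2 _ /=.
by rewrite addSn addnS !exprS exprD; ring.
Qed.

Definition cterm1 (f : RF R) : Prop := exists2 Q : {poly R}, f = toRF Q & Q.[0] = 1.

Lemma cterm1_neq0 f : cterm1 f -> f != 0.
Proof.
case=> Q -> Q0; rewrite tofrac_eq0; apply: contra_neq (oner_neq0 R) => Q_eq0.
by rewrite -Q0 Q_eq0 horner0.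
Qed.

Lemma cterm1M f g : cterm1 f -> cterm1 g -> cterm1 (f * g).
Proof.
by case=> [P -> P0] [Q -> Q0]; exists (P * Q); rewrite /toRF ?tofracM // hornerM P0 Q0 mulr1.
Qed.

Lemma cterm1_subz f p : cterm1 f -> cterm1 (f - z * toRF p).
Proof.
case=> [Q -> Q0]; exists (Q - 'X ^+ 2 * p); first by rewrite /toRF tofracB tofracM tofracXn.
by rewrite hornerD hornerN hornerM hornerXn expr0n mul0r subr0.
Qed.

Lemma recT_cterm1 t : cterm1 (recT R t) /\ cterm1 (recF (children t)).
Proof.
elim/rtree_join_ind: t => [|t1 t2 [R1 F1] [R2 F2]].
  split; last by exists 1; rewrite ?hornerC // /recF big_nil /toRF tofrac1.
  exists ('X ^+ 2 + 1); first by rewrite recT_leaf /toRF tofracD tofracXn tofrac1.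
  by rewrite hornerD hornerXn expr0n hornerC add0r.
split; last by rewrite /= recF_rcons; apply: cterm1M.
rewrite recT_join; case: F1 F2 => [Q1 -> _] [Q2 -> _].
by rewrite -mulrA /toRF -tofracM; apply/cterm1_subz/cterm1M.
Qed.

Lemma recT_neq0 t : recT R t != 0.
Proof. by case: (recT_cterm1 t) => /cterm1_neq0. Qed.

Lemma recF_children_neq0 t : recF (children t) != 0.
Proof. by case: (recT_cterm1 t) => _ /cterm1_neq0. Qed.

Definition quotT_denom (t : rtree) : RF R := z + 1 - z * quotF R (children t).

Lemma recT_factor t : recT R t = recF (children t) * quotT_denom t.
Proof.
rewrite /quotT_denom; elim/rtree_join_ind: t => [|t1 t2 IH1 _].
  by rewrite recT_leaf /recF /quotF !big_nil mulr0 subr0 mul1r.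
rewrite recT_join /= recF_rcons quotF_rcons IH1 quotTE.
by rewrite -{1}(divfK (recT_neq0 t2) (recF (children t2))); ring.
Qed.

Lemma quotT_inv t : quotT R t = (quotT_denom t)^-1.
Proof. by rewrite quotTE recT_factor invfM mulVKf ?recF_children_neq0. Qed.

Lemma quotT_denom_neq0 t : quotT_denom t != 0.
Proof. by have := recT_neq0 t; rewrite recT_factor mulf_eq0 negb_or => /andP[]. Qed.

Lemma quotT_join t1 t2 :
  quotT R (tjoin t1 t2) = quotT R t1 / (1 - z * quotT R t1 * quotT R t2).
Proof.
have := recT_neq0 (tjoin t1 t2); rewrite !quotTE /= recF_rcons recT_join.
exact/divf_1Bmul/recT_neq0/recT_neq0.
Qed.

End Reciprocal.

Theorem lemma15 (R : numFieldType) (T1 T2 : rtree) :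
  let z := zvar R in
  quotT R (tjoin T1 T2) = quotT R T1 / (1 - z * quotT R T1 * quotT R T2) /\
  quotT R (tjoin T1 T2) =
    (z + 1 - z * quotF R (children T2)) /
    ((z + 1 - z * quotF R (children T1)) * (z + 1 - z * quotF R (children T2)) - z).
Proof.
move=> z; split; first exact: quotT_join.
rewrite quotT_join !quotT_inv.
exact: divf_inv_1B (quotT_denom_neq0 _ _) (quotT_denom_neq0 _ _).
Qed.
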